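(* Let $n\ge3$ and let $f$ be a $\gamma_{tr3}(P_3\square P_n)$-function such that the number of vertices $v$ with $f(v)=\emptyset$ is minimum among all $\gamma_{tr3}(P_3\square P_n)$-functions. If $j\in\{0,1,\dots,n-2\}$ satisfies $|f((1,j))|=|f((2,j))|=1$, then $|f((1,j+1))|+|f((2,j+1))|=2$.
   Context: $P_m$ denotes the directed path with vertex set $\{0,1,\dots,m-1\}$ and arcs $(i,i+1)$ for $0\le i\le m-2$. The Cartesian product $D_1\square D_2$ has vertex set $V(D_1)\times V(D_2)$, with an arc from $(x_1,y_1)$ to $(x_2,y_2)$ iff either $(x_1,x_2)$ is an arc of $D_1$ and $y_1=y_2$, or $x_1=x_2$ and $(y_1,y_2)$ is an arc of $D_2$. For a digraph $D$ and positive integer $k$, a $k$-rainbow dominating function on $D$ is $f:V(D)\to\mathcal P(\{1,\dots,k\})$ such that every $v$ with $f(v)=\emptyset$ satisfies $\bigcup_{u\in N^-(v)}f(u)=\{1,\dots,k\}$, where $N^-(v)$ is the set of in-neighbors of $v$; its weight is $\sum_v|f(v)|$. It is total if additionally the subdigraph induced by $\{v:f(v)\ne\emptyset\}$ has no isolated vertex (a vertex with neither in- nor out-neighbors in it). $\gamma_{trk}(D)$ is the minimum weight of a total $k$-rainbow dominating function, and a $\gamma_{trk}(D)$-function is one attaining it. *)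

From mathcomp Require Import all_boot.
Set Implicit Arguments. Unset Strict Implicit. Unset Printing Implicit Defensive.

(* Colours {1,...,k} are represented by 'I_k = {0,...,k-1}. *)

Definition path_arc (m : nat) : rel 'I_m := fun i j => val j == (val i).+1.

Definition cart_arc (A B : finType) (a : rel A) (b : rel B) : rel (A * B) :=
  fun x y => (a x.1 y.1 && (x.2 == y.2)) || ((x.1 == y.1) && b x.2 y.2).

Definition P3Pn_arc (n : nat) : rel ('I_3 * 'I_n) := cart_arc (@path_arc 3) (@path_arc n).

Section Rainbow.
Variables (V : finType) (arc : rel V) (k : nat).

Definition rdf (f : V -> {set 'I_k}) : Prop :=
  forall v, f v = set0 -> \bigcup_(u | arc u v) f u = [set: 'I_k].

(* the subdigraph induced by the nonempty-labelled vertices has no isolated vertex *)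
Definition total_rdf (f : V -> {set 'I_k}) : Prop :=
  rdf f /\
  forall v, f v != set0 -> exists u, [&& u != v, f u != set0 & arc u v || arc v u].

Definition rweight (f : V -> {set 'I_k}) : nat := \sum_(v : V) #|f v|.

Definition gamma_tr_function (f : V -> {set 'I_k}) : Prop :=
  total_rdf f /\ forall g, total_rdf g -> rweight f <= rweight g.

Definition num_empty (f : V -> {set 'I_k}) : nat := #|[set v | f v == set0]|.
End Rainbow.

From mathcomp Require Import all_boot zify.
Set Implicit Arguments. Unset Strict Implicit. Unset Printing Implicit Defensive.

(* Write a := f(1,j+1) and b := f(2,j+1).  If a were empty, its in-neighbours
   (0,j+1) and (1,j) would force |f(0,j+1)| >= 2; giving (0,j+1) and (1,j+1) one
   colour each, and one colour to (0,j+2) if it was empty (then (0,j+1) carried all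
   three colours), yields a total 3RDF of no larger weight with fewer empty
   vertices.  So a is nonempty, and if b is empty then |a| >= 2: hence |a|+|b| >= 2.
   If |a|+|b| >= 3, giving a and b one colour each and filling (1,j+2), (2,j+2) when
   empty does not increase the weight, and strictly decreases it unless some empty
   vertex got filled; both contradict the choice of f. *)

Section Relabel.
Variables (V : finType) (arc : rel V) (k : nat) (L : {set 'I_k}).
Hypothesis L_neq0 : L != set0.
Implicit Types (f g : V -> {set 'I_k}) (A B s : seq V).

Definition fill (X : {set 'I_k}) := if X == set0 then L else X.

Definition relabel f A B (v : V) :=
  if v \in A then L else if v \in B then fill (f v) else f v.

Lemma relabel_out f A B v : v \notin A ++ B -> relabel f A B v = f v.
Proof. by rewrite mem_cat negb_or /relabel => /andP[/negbTE -> /negbTE ->]. Qed.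

Lemma relabel_in_neq0 f A B v : v \in A ++ B -> relabel f A B v != set0.
Proof.
rewrite mem_cat /relabel /fill; case: ifP => // _ /= vB.
by rewrite vB; case: ifP => // /negbT.
Qed.

Lemma relabel_neq0 f A B v : f v != set0 -> relabel f A B v != set0.
Proof.
move=> fv; case vAB: (v \in A ++ B); first exact: relabel_in_neq0.
by rewrite relabel_out ?vAB.
Qed.

Lemma sub_relabel f A B v : v \notin A -> f v \subset relabel f A B v.
Proof.
rewrite /relabel /fill => /negbTE ->.
by case: ifP => // _; case: eqP => [->|]; rewrite ?sub0set.
Qed.

Lemma total_rdf_relabel f A B :
  (forall u v, u \in A -> arc u v -> v \notin A ++ B -> f u \subset L) ->
  (forall v, v \in A ++ B ->
     exists2 u, u \in A ++ B & (u != v) && (arc u v || arc v u)) ->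
  total_rdf arc f -> total_rdf arc (relabel f A B).
Proof.
move=> shrink adj [f_rdf f_tot]; split.
  move=> v gv0.
  have vAB : v \notin A ++ B.
    by apply/negP => /(relabel_in_neq0 f); rewrite gv0 eqxx.
  have fv0 : f v = set0 by rewrite -(relabel_out f vAB).
  apply/eqP; rewrite eqEsubset subsetT -(f_rdf v fv0) /=.
  apply/bigcupsP => u uv; apply: subset_trans (bigcup_sup u uv).
  case uA: (u \in A); first by rewrite /relabel uA (shrink u v).
  by rewrite sub_relabel ?uA.
move=> v gv.
case vAB: (v \in A ++ B).
  by have [u uAB /andP[uv a]] := adj v vAB; exists u; rewrite uv relabel_in_neq0.
have fv : f v != set0 by rewrite -(relabel_out f (negbT vAB)).
have [u /and3P[uv fu a]] := f_tot v fv.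
by exists u; rewrite uv relabel_neq0.
Qed.

Lemma sum_uniq_mem (F : V -> nat) (P : pred V) s : uniq s ->
  \sum_(v <- s | P v) F v = \sum_v ((v \in s) && P v) * F v.
Proof.
move=> us; rewrite big_mkcond big_uniq // big_mkcond /=.
by apply: eq_bigr => v _; case: (v \in s); case: (P v); rewrite ?mul1n.
Qed.

Lemma rweight_relabel f A B : uniq (A ++ B) ->
  rweight (relabel f A B) + \sum_(v <- A) #|f v| =
  rweight f + (size A + count (fun v => f v == set0) B) * #|L|.
Proof.
rewrite cat_uniq => /and3P[uA AB uB].
rewrite -sum1_count -sum1_size !(sum_uniq_mem _ _ uA) (sum_uniq_mem _ _ uB).
rewrite /rweight mulnDl !big_distrl -!big_split /=; apply: eq_bigr => v _.
rewrite !andbT /relabel /fill.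
case vA: (v \in A).
  have -> : v \in B = false by apply: contraNF AB => vB; apply/hasP; exists v.
  by rewrite /=; lia.
case: (v \in B); last by rewrite /=; lia.
by case: eqP => [->|]; rewrite /= ?cards0; lia.
Qed.

Lemma num_emptyE f : num_empty f = \sum_v (f v == set0).
Proof.
rewrite /num_empty -sum1_card big_mkcond /=.
by apply: eq_bigr => v _; rewrite inE; case: (f v == set0).
Qed.

Lemma num_empty_relabel f A B : uniq (A ++ B) ->
  num_empty (relabel f A B) + count (fun v => f v == set0) (A ++ B) = num_empty f.
Proof.
move=> uAB; rewrite -sum1_count (sum_uniq_mem _ _ uAB) !num_emptyE.
rewrite -big_split /=; apply: eq_bigr => v _.
case vAB: (v \in A ++ B); last by rewrite relabel_out ?vAB // addn0.
by rewrite (negbTE (relabel_in_neq0 f vAB)) muln1.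
Qed.

Lemma gamma_tr_function_le f g :
  gamma_tr_function arc f -> total_rdf arc g -> rweight g <= rweight f ->
  gamma_tr_function arc g.
Proof.
move=> [_ f_min] g_tot gf; split=> // h h_tot.
exact: leq_trans gf (f_min h h_tot).
Qed.

Lemma relabel_cost f A B :
  gamma_tr_function arc f -> uniq (A ++ B) -> total_rdf arc (relabel f A B) ->
  \sum_(v <- A) #|f v| <= (size A + count (fun v => f v == set0) B) * #|L|.
Proof.
move=> f_gamma uAB g_tot.
by have := rweight_relabel f uAB; have := f_gamma.2 _ g_tot; lia.
Qed.

Lemma relabel_cost_lt f A B :
  gamma_tr_function arc f ->
  (forall g, gamma_tr_function arc g -> num_empty f <= num_empty g) ->
  uniq (A ++ B) -> total_rdf arc (relabel f A B) ->
  has (fun v => f v == set0) (A ++ B) ->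
  \sum_(v <- A) #|f v| < (size A + count (fun v => f v == set0) B) * #|L|.
Proof.
move=> f_gamma f_fewest uAB g_tot; rewrite has_count => empty_AB.
have W := rweight_relabel f uAB; have E := num_empty_relabel f uAB.
rewrite ltnNge; apply/negP => cost_le.
have g_gamma : gamma_tr_function arc (relabel f A B).
  by apply: gamma_tr_function_le f_gamma g_tot _; lia.
by have := f_fewest _ g_gamma; lia.
Qed.

Lemma rdf_card_cover f v s : rdf arc f -> f v = set0 ->
  (forall u, arc u v -> u \in s) -> k <= \sum_(u <- s) #|f u|.
Proof.
move=> f_rdf fv0 ins.
have cover : [set: 'I_k] \subset \bigcup_(u <- s) f u.
  rewrite -(f_rdf v fv0); apply/bigcupsP => u /ins us.
  by rewrite bigcup_seq (bigcup_sup u).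
have := subset_leq_card cover; rewrite cardsT card_ord => /leq_trans; apply.
elim/big_ind2: _ => [|m X n Y leX leY|]; rewrite ?cards0 //.
exact: leq_trans (leq_card_setU X Y) (leq_add leX leY).
Qed.

End Relabel.

Section Grid.
Variable m : nat.
Local Notation N := m.+1.
Local Notation V := ('I_3 * 'I_N)%type.
Local Notation arc := (@P3Pn_arc N).
Implicit Types (u v : V) (i c : nat).

(* [pt i c] is the vertex (i, c) only when i < 3 and c < N, since [inord] wraps
   out-of-range values to 0; [cell i c] is empty off the grid. *)
Definition pt i c : V := (inord i, inord c).

Definition cell i c : seq V := if (i < 3) && (c < N) then [:: pt i c] else [::].

Lemma pt1 i c : i < 3 -> val (pt i c).1 = i. Proof. exact: inordK. Qed.
Lemma pt2 i c : c < N -> val (pt i c).2 = c. Proof. exact: inordK. Qed.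

Lemma pt_val v : pt (val v.1) (val v.2) = v.
Proof. by case: v => a b; rewrite /pt /= !inord_val. Qed.

Lemma mem_cell v i c : (v \in cell i c) = (val v.1 == i) && (val v.2 == c).
Proof.
case: v => a b; rewrite /cell /=; case: ifP => [/andP[hi hc]|out].
  by rewrite mem_seq1 xpair_eqE -!val_eqE /= !inordK.
apply/esym/negbTE/andP => -[/eqP ea /eqP eb].
by move: out; rewrite -ea -eb !ltn_ord.
Qed.

Lemma cellP v i c : v \in cell i c -> [/\ i < 3, c < N & v = pt i c].
Proof. by rewrite mem_cell => /andP[/eqP <- /eqP <-]; rewrite !ltn_ord pt_val. Qed.

Lemma cellE i c : i < 3 -> c < N -> cell i c = [:: pt i c].
Proof. by rewrite /cell => -> ->. Qed.

Lemma cell_row_oob i c : 2 < i -> cell i c = [::].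
Proof. by move=> hi; rewrite /cell ltnNge hi. Qed.

Lemma count_mem_cell v i c :
  count_mem v (cell i c) = (val v.1 == i) && (val v.2 == c).
Proof. by rewrite count_uniq_mem ?mem_cell // /cell; case: ifP. Qed.

Lemma arcE u v :
  arc u v = (v \in cell (val u.1).+1 (val u.2) ++ cell (val u.1) (val u.2).+1).
Proof.
rewrite mem_cat !mem_cell /P3Pn_arc /cart_arc /path_arc -!val_eqE.
by rewrite !(eq_sym (val u.2)) !(eq_sym (val u.1)).
Qed.

Lemma arc_pt_down i c : i.+1 < 3 -> c < N -> arc (pt i c) (pt i.+1 c).
Proof. by move=> hi hc; rewrite arcE mem_cat mem_cell !pt1 ?pt2 ?eqxx // ltnW. Qed.

Lemma arc_pt_right i c : i < 3 -> c.+1 < N -> arc (pt i c) (pt i c.+1).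
Proof.
by move=> hi hc; rewrite arcE mem_cat !mem_cell !pt1 ?pt2 ?eqxx ?orbT // ltnW.
Qed.

Lemma adjE u v : (u != v) && (arc u v || arc v u) = arc u v || arc v u.
Proof.
case: eqVneq => [->|//]; rewrite orbb arcE mem_cat !mem_cell.
by rewrite !eqxx !(ltn_eqF (ltnSn _)).
Qed.

Lemma in_arc_pt u i c : i < 3 -> c < N ->
  arc u (pt i c) -> u \in [:: pt i.-1 c; pt i c.-1].
Proof.
move=> hi hc; rewrite arcE mem_cat !mem_cell pt1 // pt2 // !inE.
by case/orP => /andP[/eqP -> /eqP ->]; rewrite pt_val eqxx ?orbT.
Qed.

(* On the border of the grid, [pt i.-1 c] or [pt i c.-1] is [pt i c] itself. *)
Lemma rdf_pt_cover (f : V -> {set 'I_3}) i c : rdf arc f -> i < 3 -> c < N ->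
  f (pt i c) = set0 -> 3 <= #|f (pt i.-1 c)| + #|f (pt i c.-1)|.
Proof.
move=> f_rdf hi hc fv0.
have := rdf_card_cover f_rdf fv0 (fun u => @in_arc_pt u i c hi hc).
by rewrite big_cons big_seq1.
Qed.

End Grid.

Section Exchange.
Variables (m : nat) (f : 'I_3 * 'I_m.+1 -> {set 'I_3}).
Local Notation N := m.+1.
Local Notation arc := (@P3Pn_arc N).
Local Notation pt := (@pt m).
Local Notation cell := (@cell m).
Hypothesis f_gamma : gamma_tr_function arc f.
Hypothesis f_fewest : forall g : 'I_3 * 'I_N -> {set 'I_3},
  gamma_tr_function arc g -> num_empty f <= num_empty g.
Variable j : nat.
Hypothesis hj : j.+1 < N.
Hypothesis f1j : #|f (pt 1 j)| = 1.
Hypothesis f2j : #|f (pt 2 j)| = 1.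

Let one : {set 'I_3} := [set ord0].
Let one_neq0 : one != set0. Proof. by rewrite -card_gt0 cards1. Qed.

Lemma next_mid_neq0 : f (pt 1 j.+1) != set0.
Proof.
apply/negP => /eqP a0.
have x_ge2 : 2 <= #|f (pt 0 j.+1)|.
  by have := rdf_pt_cover f_gamma.1.1 (isT : 1 < 3) hj a0; rewrite f1j addn1.
pose A := cell 0 j.+1 ++ cell 1 j.+1; pose B := cell 0 j.+2.
have uAB : uniq (A ++ B).
  apply: count_mem_uniq => v.
  by rewrite !count_cat !count_mem_cell !mem_cat !mem_cell; lia.
have g_tot : total_rdf arc (relabel one f A B).
  apply: (total_rdf_relabel one_neq0 _ _ f_gamma.1).
  - move=> u v; rewrite mem_cat => /orP[] /cellP[_ _ ->]; last by rewrite a0 sub0set.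
    by rewrite arcE pt1 // pt2 // !mem_cat => /orP[] ->; rewrite ?orbT.
  - move=> v; rewrite !mem_cat -orbA => /or3P[] /cellP[_ hc ->].
    + exists (pt 1 j.+1); last by rewrite adjE arc_pt_down ?orbT.
      by rewrite !mem_cat !mem_cell pt1 ?pt2 ?eqxx ?orbT.
    + exists (pt 0 j.+1); last by rewrite adjE arc_pt_down.
      by rewrite !mem_cat !mem_cell pt1 ?pt2 ?eqxx.
    + exists (pt 0 j.+1); last by rewrite adjE arc_pt_right.
      by rewrite !mem_cat !mem_cell pt1 ?pt2 ?eqxx.
have := relabel_cost_lt one_neq0 f_gamma f_fewest uAB g_tot.
rewrite /A !cellE //= big_cons big_seq1 a0 eqxx cards0 cards1 orbT /B => /(_ isT).
set x := #|f (pt 0 j.+1)| in x_ge2 *.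
case: (ltnP j.+2 N) => hj2; last by rewrite /cell (leq_gtF hj2) /=; lia.
rewrite cellE //=; case: (f (pt 0 j.+2) =P set0) => [p0|_] /=; last by lia.
by have := rdf_pt_cover f_gamma.1.1 (isT : 0 < 3) hj2 p0; rewrite p0 cards0 /= -/x; lia.
Qed.

Lemma next_lower_weight_le2 : #|f (pt 1 j.+1)| + #|f (pt 2 j.+1)| <= 2.
Proof.
rewrite leqNgt; apply/negP => ab3.
have a_gt0 : 0 < #|f (pt 1 j.+1)| by rewrite card_gt0 next_mid_neq0.
pose A := cell 1 j.+1 ++ cell 2 j.+1; pose B := cell 1 j.+2 ++ cell 2 j.+2.
have uAB : uniq (A ++ B).
  apply: count_mem_uniq => v.
  by rewrite !count_cat !count_mem_cell !mem_cat !mem_cell; lia.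
have g_tot : total_rdf arc (relabel one f A B).
  apply: (total_rdf_relabel one_neq0 _ _ f_gamma.1).
  - move=> u v; rewrite mem_cat => /orP[] /cellP[_ _ ->];
      rewrite arcE pt1 // pt2 // ?(@cell_row_oob _ 3) // => vA vAB; exfalso;
      by move: vA vAB; rewrite !mem_cat ?in_nil !mem_cell; lia.
  - move=> v; rewrite !mem_cat -!orbA => /or4P[] /cellP[_ hc ->].
    + exists (pt 2 j.+1); last by rewrite adjE arc_pt_down ?orbT.
      by rewrite !mem_cat !mem_cell pt1 ?pt2 ?eqxx ?orbT.
    + exists (pt 1 j.+1); last by rewrite adjE arc_pt_down.
      by rewrite !mem_cat !mem_cell pt1 ?pt2 ?eqxx.
    + exists (pt 1 j.+1); last by rewrite adjE arc_pt_right.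
      by rewrite !mem_cat !mem_cell pt1 ?pt2 ?eqxx.
    + exists (pt 2 j.+1); last by rewrite adjE arc_pt_right.
      by rewrite !mem_cat !mem_cell pt1 ?pt2 ?eqxx ?orbT.
have cost := relabel_cost one_neq0 f_gamma uAB g_tot.
have cost_lt := relabel_cost_lt one_neq0 f_gamma f_fewest uAB g_tot.
move: cost cost_lt; rewrite /A !cellE //= big_cons big_seq1 cards1 /B.
set a := #|f (pt 1 j.+1)| in ab3 a_gt0 *; set b := #|f (pt 2 j.+1)| in ab3 *.
case: (ltnP j.+2 N) => hj2; last by rewrite /cell (leq_gtF hj2) /=; lia.
rewrite !cellE //=.
case: (f (pt 1 j.+2) =P set0) => [q0|_]; case: (f (pt 2 j.+2) =P set0) => [r0|_];
  rewrite /= ?orbT; try lia.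
by have := rdf_pt_cover f_gamma.1.1 (isT : 2 < 3) hj2 r0; rewrite q0 cards0 /= -/b; lia.
Qed.

Lemma next_lower_weight_ge2 : 2 <= #|f (pt 1 j.+1)| + #|f (pt 2 j.+1)|.
Proof.
have := next_mid_neq0; rewrite -card_gt0.
case: (f (pt 2 j.+1) =P set0) => [b0|/eqP]; last by rewrite -card_gt0; lia.
by have := rdf_pt_cover f_gamma.1.1 (isT : 2 < 3) hj b0; rewrite f2j b0 cards0 /=; lia.
Qed.

End Exchange.

Theorem lemma4p11 (n : nat) (f : 'I_3 * 'I_n -> {set 'I_3}) :
  3 <= n ->
  gamma_tr_function (@P3Pn_arc n) f ->
  (forall g : 'I_3 * 'I_n -> {set 'I_3},
      gamma_tr_function (@P3Pn_arc n) g -> num_empty f <= num_empty g) ->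
  forall j j' : 'I_n, val j' = (val j).+1 ->
  #|f (inord 1, j)| = 1 -> #|f (inord 2, j)| = 1 ->
  #|f (inord 1, j')| + #|f (inord 2, j')| = 2.
Proof.
case: n f => [//|m] f _ f_gamma f_fewest j j' jj' f1j f2j.
have ptE i (c : 'I_m.+1) : (inord i, c) = pt m i c by rewrite /pt inord_val.
rewrite !ptE jj' in f1j f2j *.
have hj : (val j).+1 < m.+1 by rewrite -jj' ltn_ord.
have le2 := next_lower_weight_le2 f_gamma f_fewest hj f1j f2j.
have ge2 := next_lower_weight_ge2 f_gamma f_fewest hj f1j f2j.
by apply/anti_leq/andP.
Qed.
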